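(* Let $q\geq 2$ and $k$ be relatively prime natural numbers, and let \[ k=k_1+k_2q^{a_2}+\cdots+k_Nq^{a_N} \] be the base-$q$ expansion of $k$, where $0<a_2<\cdots<a_N$ and $1\le k_i<q$ (only nonzero digits listed). Then there exist $k', u\in\mathbb{N}$ such that $u>1$, $k\mid k'$, and the base-$q$ expansion of $k'$ is \[ k'=k_1+k_2q^{a_2'}+\cdots+k_Nq^{a_N'} \] (with $0<a_2'<\cdots<a_N'$), where $a_i'\equiv 1\pmod{u}$ for all $i\in\{2,\ldots,N\}$. *)

From mathcomp Require Import all_boot.
Set Implicit Arguments. Unset Strict Implicit. Unset Printing Implicit Defensive.

Definition qsum (q : nat) (ds : seq (nat * nat)) : nat :=
  \sum_(p <- ds) p.1 * q ^ p.2.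

(* ds lists the nonzero digits k_2..k_N with exponents a_2 < ... < a_N, all
   exponents positive and all digits in [1, q). *)
Definition qdigits_ok (q : nat) (ds : seq (nat * nat)) : Prop :=
  all (fun p => (0 < p.1 < q) && (0 < p.2)) ds /\ sorted ltn (map snd ds).

From mathcomp Require Import all_boot.
From mathcomp Require Import cyclic.

(* With T = totient k we have q ^ T = 1 (mod k) by Euler, so replacing every
   exponent a >= 1 by a + T (a - 1) = (a - 1)(T + 1) + 1 changes no power
   q ^ a modulo k, keeps the exponents positive and strictly increasing, and
   makes them all congruent to 1 modulo u = T + 1. *)

Lemma zip_map_fst_snd (A B C : Type) (f : B -> C) (ds : seq (A * B)) :
  zip (map fst ds) (map f (map snd ds)) = map (fun p => (p.1, f p.2)) ds.
Proof. by elim: ds => [|[x y] ds IH] //=; rewrite IH. Qed.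

Lemma qsum_map_exp_mod (q k : nat) (f : nat -> nat) (ds : seq (nat * nat)) :
  (forall a, q ^ f a = q ^ a %[mod k]) ->
  qsum q (map (fun p => (p.1, f p.2)) ds) = qsum q ds %[mod k].
Proof.
move=> fE; rewrite /qsum big_map; elim: ds => [|[d a] ds IH] /=.
  by rewrite !big_nil.
by rewrite !big_cons /= -modnDm IH -modnMmr fE modnMmr modnDm.
Qed.

Lemma qdigits_ok_map_exp (q : nat) (f : nat -> nat) (ds : seq (nat * nat)) :
  {homo f : a b / a < b} -> (forall a, 0 < a -> 0 < f a) ->
  qdigits_ok q ds -> qdigits_ok q (map (fun p => (p.1, f p.2)) ds).
Proof.
move=> f_mono f_pos [digits_ok sorted_exps]; split.
  by rewrite all_map; apply: sub_all digits_ok => -[d a] /= /andP[-> /f_pos].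
by rewrite -map_comp (_ : _ \o _ = f \o snd) // map_comp (homo_sorted f_mono).
Qed.

Definition stretch_exp (T a : nat) : nat := a + T * (a - 1).

Lemma stretch_exp_mono (T : nat) : {homo stretch_exp T : a b / a < b}.
Proof.
by move=> a b ab; rewrite /stretch_exp -addSn leq_add // leq_mul // leq_sub2r // ltnW.
Qed.

Lemma stretch_exp_gt0 (T a : nat) : 0 < a -> 0 < stretch_exp T a.
Proof. by move=> a0; rewrite /stretch_exp addn_gt0 a0. Qed.

Lemma stretch_exp_mod (T a : nat) : 0 < a -> stretch_exp T a = 1 %[mod T.+1].
Proof.
move=> a0; have -> : stretch_exp T a = (a - 1) * T.+1 + 1.
  by rewrite /stretch_exp mulnS [_ * T]mulnC addnAC subnK.
by rewrite modnMDl.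
Qed.

Lemma expn_stretch_exp_mod (q k T a : nat) :
  q ^ T = 1 %[mod k] -> q ^ stretch_exp T a = q ^ a %[mod k].
Proof.
move=> qT; rewrite /stretch_exp expnD expnM -modnMmr -modnXm qT modnXm exp1n.
by rewrite modnMmr muln1.
Qed.

Theorem lemma1 (q k k1 : nat) (ds : seq (nat * nat)) :
  2 <= q -> coprime q k ->
  0 < k1 < q -> qdigits_ok q ds ->
  k = k1 + qsum q ds ->
  exists (k' u : nat) (es : seq nat),
    [/\ 1 < u, k %| k', size es = size ds,
        qdigits_ok q (zip (map fst ds) es)
      & k' = k1 + qsum q (zip (map fst ds) es)
        /\ all (fun e => e == 1 %[mod u]) es].
Proof.
move=> _ qk /andP[k1_gt0 _] ok kE.
set T := totient k; set f := stretch_exp T.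
have k_gt0 : 0 < k by rewrite kE addn_gt0 k1_gt0.
have T_gt0 : 0 < T by rewrite totient_gt0.
have fE a : q ^ f a = q ^ a %[mod k].
  exact/expn_stretch_exp_mod/Euler_exp_totient.
exists (k1 + qsum q (zip (map fst ds) (map f (map snd ds)))), T.+1,
  (map f (map snd ds)).
rewrite zip_map_fst_snd; split => //.
- by rewrite /dvdn -modnDmr qsum_map_exp_mod // modnDmr -kE modnn.
- by rewrite !size_map.
- exact: qdigits_ok_map_exp (@stretch_exp_mono T) (@stretch_exp_gt0 T) ok.
split => //; case: ok => digits_ok _.
rewrite -map_comp all_map; apply: sub_all digits_ok => -[d a] /= /andP[_ a0].
exact/eqP/stretch_exp_mod.
Qed.
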